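(* Let $U\in U(2)$ and $\epsilon>0$ be fixed. Then for every number of control qubits $n_c$, an approximate decomposition of the $n_c$-controlled gate $C^{n_c}U$ up to error $\epsilon$ can be constructed on $n=n_c+1$ qubits without auxiliary qubits using a number of CNOT gates that is linear in $n$ (i.e., $O(n)$, with the constant depending on $U$ and $\epsilon$ but not on $n$).
   Context: $C^{n_c}U$ denotes the $(n_c+1)$-qubit gate with control qubits $c_1,\dots,c_{n_c}$ and target qubit $t$ that applies $U$ to $t$ when all controls are in state $|1\rangle$ and the identity otherwise. An approximate decomposition up to error $\epsilon$ is a circuit of CNOT and single-qubit gates on these $n_c+1$ qubits such that, for each computational basis state $x$ of the controls, the operator $V_x$ applied to the target satisfies $\|V_x-U\|_{\max}\le\epsilon$ if $x=1\cdots1$ and $\|V_x-I\|_{\max}\le\epsilon$ otherwise, where $\|M\|_{\max}=\max_{i,j}|M_{ij}|$. *)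

From mathcomp Require Import all_boot all_algebra.
From mathcomp Require Import Rstruct.
From mathcomp.real_closed Require Export complex.
From mathcomp Require Export spectral.
Set Implicit Arguments.
Unset Strict Implicit.
Unset Printing Implicit Defensive.
Import GRing.Theory Num.Theory.
Local Open Scope ring_scope.

Notation R := Rdefinitions.R.
Notation C := (R[i]).

(* Computational basis of n qubits: indices x : 'I_(2^n);
   the state of qubit k in basis state x is bit k of x. *)
Definition qbit (x : nat) (k : nat) : bool := odd (x %/ 2 ^ k).
Definition b2o (b : bool) : 'I_2 := inord (nat_of_bool b).

Inductive gate (n : nat) : Type :=
| CNOT (c t : 'I_n) of c != t
| Single (q : 'I_n) (u : 'M[C]_2) of u \is unitarymx.

Definition is_cnot n (g : gate n) : bool :=
  if g is CNOT _ _ _ then true else false.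

(* Matrix of a gate; entry (x, y) = <x| G |y>  (row = output basis state). *)
Definition gate_mx n (g : gate n) : 'M[C]_(2 ^ n) :=
  match g with
  | CNOT c t _ =>
      \matrix_(x, y) (([forall k : 'I_n,
          qbit x k == (if (k == t) && qbit y c then ~~ qbit y k else qbit y k)])%:R : C)
  | Single q u _ =>
      \matrix_(x, y) (if [forall k : 'I_n, (k != q) ==> (qbit x k == qbit y k)]
                      then u (b2o (qbit x q)) (b2o (qbit y q)) else 0)
  end.

(* A circuit is a sequence of gates, the head being applied first. *)
Definition circuit n := seq (gate n).

Fixpoint circuit_mx n (c : circuit n) : 'M[C]_(2 ^ n) :=
  match c with
  | [::] => 1%:M
  | g :: c' => circuit_mx c' *m gate_mx g
  end.

Definition cnot_count n (c : circuit n) : nat := count (@is_cnot n) c.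

(* Basis state of nc.+1 qubits with controls (qubits 0..nc-1) in state x
   and target (qubit nc) in state a. *)
Lemma idx_proof nc (x : 'I_(2 ^ nc)) (a : 'I_2) : (x + a * 2 ^ nc < 2 ^ nc.+1)%N.
Proof.
case: a => [[|[|a]] //= Ha].
- by rewrite mul0n addn0 expnS (leq_trans (ltn_ord x)) // leq_pmull.
- by rewrite mul1n expnS mul2n -addnn ltn_add2r.
Qed.
Definition idx nc (x : 'I_(2 ^ nc)) (a : 'I_2) : 'I_(2 ^ nc.+1) :=
  Ordinal (idx_proof x a).

Definition max_close (A B : 'M[C]_2) (eps : R) : Prop :=
  forall a b : 'I_2, `|A a b - B a b| <= (eps%:C)%C.

(* M (on nc.+1 qubits, controls 0..nc-1, target nc) is an approximate
   decomposition of C^{nc}U up to eps: it acts as  sum_x |x><x| (x) V_x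
   with V_x eps-close to U when x = 1...1 and to I otherwise. *)
Definition approx_CnU nc (U : 'M[C]_2) (eps : R) (M : 'M[C]_(2 ^ nc.+1)) : Prop :=
  (forall (x y : 'I_(2 ^ nc)) (a b : 'I_2), x != y -> M (idx x a) (idx y b) = 0)
  /\ forall x : 'I_(2 ^ nc),
      let V := \matrix_(a < 2, b < 2) M (idx x a) (idx x b) in
      max_close V (if val x == (2 ^ nc).-1 then U else 1%:M) eps.

From HB Require Import structures.
From mathcomp Require Import all_boot all_order all_algebra Rstruct zify ring.
Import Order.TTheory GRing.Theory Num.Theory.
Local Open Scope ring_scope.
Local Open Scope sesquilinear_scope.
Set Implicit Arguments.
Unset Strict Implicit.
Unset Printing Implicit Defensive.

(* Diagonalizing U and pulling out a global phase, U = mu P^* diag(ka, ka^* ) P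
   with P unitary and |mu| = |ka| = 1. Hence C^nU is P^* C^n diag(ka, ka^* ) P,
   with P acting on the target, followed by the phase mu controlled by the n
   controls.
   - C^n diag(nu^2, nu^*^2) is the squared commutator of the multi-controlled
     NOTs of the two halves of the controls with the phase gates diag(1, nu),
     diag(1, nu^* ) on the target. Each half serves as dirty ancillas for the
     multi-controlled NOT of the other half (V-chains of Barenco et al.), so
     this costs O(n) CNOTs.
   - The phase l controlled by k qubits is diag(l', l'^* ) on one of them,
     controlled by the other k - 1, times the phase l' controlled by these
     k - 1 qubits, where l'^2 = l. Taking l' in the right half-plane at least
     halves the squared distance to 1, so after m = O(log (1/eps)) steps the
     remaining controlled phase can be dropped at cost eps: O(m n) CNOTs in all. *)

(** * Binary expansions *)

Lemma qbit0 x : qbit x 0 = odd x.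
Proof. by rewrite /qbit expn0 divn1. Qed.

Lemma qbitS x k : qbit x k.+1 = qbit x./2 k.
Proof. by rewrite /qbit expnS divnMA divn2. Qed.

Lemma qbit_inj m x y : (x < 2 ^ m)%N -> (y < 2 ^ m)%N ->
  (forall k, (k < m)%N -> qbit x k = qbit y k) -> x = y.
Proof.
elim: m x y => [|m IH] x y; first by rewrite expn0 !ltnS !leqn0 => /eqP-> /eqP->.
rewrite expnS => ltx lty eq_bits.
have eq_half : x./2 = y./2.
  apply: IH; try by rewrite -divn2 ltn_divLR // mulnC.
  by move=> k ltkm; rewrite -!qbitS; apply: eq_bits.
have eq_odd : odd x = odd y by rewrite -!qbit0; apply: eq_bits.
by rewrite -[x]odd_double_half -[y]odd_double_half eq_odd eq_half.
Qed.

Lemma qbit_lo x a m k : (x < 2 ^ m)%N -> (k < m)%N -> qbit (x + a * 2 ^ m) k = qbit x k.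
Proof.
move=> ltx ltk; rewrite /qbit -(subnK (ltnW ltk)) expnD mulnA divnDMl ?expn_gt0 //.
by rewrite oddD oddM oddX subn_eq0 leqNgt ltk andbF addbF.
Qed.

Lemma qbit_hi x (a : 'I_2) m : (x < 2 ^ m)%N -> qbit (x + a * 2 ^ m) m = (a != ord0).
Proof.
move=> ltx; rewrite /qbit divnDMl ?expn_gt0 // divn_small // add0n.
by case: a => [[|[|a]] lta].
Qed.

Lemma qbit_pred_exp2 m k : (k < m)%N -> qbit (2 ^ m).-1 k.
Proof.
elim: m k => // m IH k ltk.
have -> : (2 ^ m.+1).-1 = ((2 ^ m).-1).*2.+1 by have := expn_gt0 2 m; rewrite expnS; lia.
case: k ltk => [|k] ltk; first by rewrite qbit0 /= odd_double.
by rewrite qbitS /= uphalf_double IH.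
Qed.

Lemma qbit_all_eq_pred m x : (x < 2 ^ m)%N ->
  (forall k, (k < m)%N -> qbit x k) <-> x = (2 ^ m).-1.
Proof.
move=> ltx; split=> [all_x|-> k]; last exact: qbit_pred_exp2.
apply: (@qbit_inj m) => //; first by rewrite prednK ?expn_gt0.
by move=> k ltk; rewrite all_x // qbit_pred_exp2.
Qed.

(** * One-qubit matrices *)

Definition unimodular (z : C) := z * z^* = 1.

Lemma unimodular_conj z : unimodular z -> unimodular z^*.
Proof. by rewrite /unimodular conjCK mulrC. Qed.

Lemma unimodularM z w : unimodular z -> unimodular w -> unimodular (z * w).
Proof. by rewrite /unimodular rmorphM mulrACA => -> ->; rewrite mulr1. Qed.

Lemma unimodularN z : unimodular z -> unimodular (- z).
Proof. by rewrite /unimodular rmorphN mulrNN. Qed.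

Lemma unimodular_sqrt z : unimodular z -> unimodular (sqrtC z).
Proof.
rewrite /unimodular => uz.
have /eqP : (sqrtC z * (sqrtC z)^*) ^+ 2 = 1 by rewrite exprMn -rmorphXn sqrtCK.
rewrite sqrf_eq1 => /orP[/eqP -> //|/eqP eqN1].
by have := mul_conjC_ge0 (sqrtC z); rewrite eqN1 oppr_ge0 ler10.
Qed.

Lemma unimodular_norm z : unimodular z -> `|z| = 1.
Proof.
move=> uz; have /eqP : `|z| ^+ 2 = 1 by rewrite normCK.
rewrite sqrf_eq1 => /orP[/eqP //|/eqP eqN1].
by have := normr_ge0 z; rewrite eqN1 oppr_ge0 ler10.
Qed.

Lemma unimodular_i : unimodular 'i.
Proof. by rewrite /unimodular conjCi mulrN -expr2 sqrCi opprK. Qed.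

Definition ent (M : 'M[C]_2) (a b : bool) := M (b2o a) (b2o b).
Definition mx2 (f : bool -> bool -> C) : 'M[C]_2 :=
  \matrix_(i, j) f (i != ord0) (j != ord0).

Lemma b2oK (i : 'I_2) : b2o (i != ord0) = i.
Proof. by apply: val_inj; case: i => [[|[|i]] lti] //=; rewrite /b2o /= inordK. Qed.

Lemma b2o_inj : injective b2o.
Proof. by move=> a b /(congr1 val); rewrite /b2o /= !inordK //; case: a; case: b. Qed.

Lemma b2o_neq0 b : (b2o b != ord0) = b.
Proof. by case: b; rewrite /b2o -val_eqE /= inordK. Qed.

Lemma ent_mx2 f a b : ent (mx2 f) a b = f a b.
Proof. by rewrite /ent mxE !b2o_neq0. Qed.

Lemma ent1 a b : ent 1%:M a b = (a == b)%:R.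
Proof. by rewrite /ent mxE (inj_eq b2o_inj). Qed.

Lemma entZ (c : C) (M : 'M[C]_2) a b : ent (c *: M) a b = c * ent M a b.
Proof. by rewrite /ent mxE. Qed.

Lemma ent_tr (M : 'M[C]_2) a b : ent (M ^t*) a b = (ent M b a)^*.
Proof. by rewrite /ent !mxE. Qed.

Lemma ent_mul (M N : 'M[C]_2) a b :
  ent (M *m N) a b = ent M a false * ent N false b + ent M a true * ent N true b.
Proof.
rewrite /ent mxE (bigD1 (b2o false)) //= (bigD1 (b2o true)) /=; last first.
  by apply/eqP => /b2o_inj.
rewrite big1 ?addr0 // => i /andP[neq_f neq_t].
by move: neq_f neq_t; rewrite -(b2oK i); case: (i != ord0); rewrite eqxx.
Qed.

Lemma mx2P (M N : 'M[C]_2) : (forall a b, ent M a b = ent N a b) -> M = N.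
Proof. by move=> eqMN; apply/matrixP => i j; rewrite -(b2oK i) -(b2oK j); apply: eqMN. Qed.

Definition diag2 (f : bool -> C) := mx2 (fun a b => (a == b)%:R * f a).
Definition Xmx := mx2 (fun a b => (a != b)%:R).

Lemma eq_diag2 f g : f =1 g -> diag2 f = diag2 g.
Proof. by move=> eq_fg; apply: mx2P => a b; rewrite !ent_mx2 eq_fg. Qed.

Lemma mul_diag2 f g : diag2 f *m diag2 g = diag2 (f \* g).
Proof. by apply: mx2P => a b; rewrite ent_mul !ent_mx2; case: a; case: b; rewrite /=; ring. Qed.

Lemma diag2_const c : diag2 (fun=> c) = c *: 1%:M.
Proof. by apply: mx2P => a b; rewrite entZ ent_mx2 ent1 mulrC. Qed.

Lemma diag2_1 : diag2 (fun=> 1) = 1%:M.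
Proof. by rewrite diag2_const scale1r. Qed.

Lemma XmxK : Xmx *m Xmx = 1%:M.
Proof. by apply: mx2P => a b; rewrite ent_mul !ent_mx2 ent1; case: a; case: b; rewrite /=; ring. Qed.

Lemma Xmx_diag2 f : Xmx *m diag2 f *m Xmx = diag2 (f \o negb).
Proof. by apply: mx2P => a b; rewrite !ent_mul !ent_mx2; case: a; case: b; rewrite /=; ring. Qed.

Lemma diag2_tr f : diag2 f ^t* = diag2 (fun b => (f b)^*).
Proof.
apply: mx2P => a b; rewrite ent_tr !ent_mx2 rmorphM /= conjC_nat eq_sym.
by case: eqP => [->|]; rewrite ?mul0r.
Qed.

Lemma diag2_unitary f : (forall b, unimodular (f b)) -> diag2 f \is unitarymx.
Proof. by move=> uf; apply/unitarymxP; rewrite diag2_tr mul_diag2 -diag2_1; apply: eq_diag2. Qed.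

Lemma diag2_unimodular f b : diag2 f \is unitarymx -> unimodular (f b).
Proof.
move/unitarymxP; rewrite diag2_tr mul_diag2 -diag2_1 => /(congr1 (fun M => ent M b b)).
by rewrite !ent_mx2 eqxx !mul1r.
Qed.

Lemma Xmx_unitary : Xmx \is unitarymx.
Proof.
apply/unitarymxP; suff -> : Xmx ^t* = Xmx by exact: XmxK.
by apply: mx2P => a b; rewrite ent_tr !ent_mx2 conjC_nat eq_sym.
Qed.

Lemma unitary_entry_le1 (M : 'M[C]_2) i j : M \is unitarymx -> `|M i j| <= 1.
Proof.
move/unitarymxP => /(congr1 (fun M => ent M (i != ord0) (i != ord0))).
rewrite ent_mul !ent_tr ent1 eqxx mulr1n /ent !b2oK -!normCK => row_norm.
have : `|M i j| ^+ 2 <= 1.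
  rewrite -row_norm -[in M i j](b2oK j).
  by case: (j != ord0); rewrite ?lerDl ?lerDr exprn_ge0.
by rewrite -(ler_sqr (normr_ge0 _)) ?expr1n // qualifE /= ler01.
Qed.

Definition Pmx (nu : C) := diag2 (fun b => if b then nu else 1).

Lemma Pmx_unitary nu : unimodular nu -> Pmx nu \is unitarymx.
Proof. by move=> unu; apply: diag2_unitary => -[] //; rewrite /unimodular conjC1 mulr1. Qed.

Lemma Pmx_conjK nu : unimodular nu -> Pmx nu *m Pmx nu^* = 1%:M.
Proof. by move=> unu; rewrite mul_diag2 -diag2_1; apply: eq_diag2 => -[] /=; rewrite ?mulr1. Qed.

Lemma Pmx_conjKV nu : unimodular nu -> Pmx nu^* *m Pmx nu = 1%:M.
Proof. by move=> /unimodular_conj /Pmx_conjK; rewrite conjCK. Qed.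

Lemma comm_word_mx2 (p1 p2 : bool) nu : unimodular nu ->
  let X p := if p then Xmx else 1%:M in
  X p1 *m Pmx nu *m X p2 *m Pmx nu^* *m X p1 *m Pmx nu *m X p2 *m Pmx nu^* =
  if p1 && p2 then diag2 (fun b => if b then nu^* ^+ 2 else nu ^+ 2) else 1%:M.
Proof.
move=> unu X; rewrite /X; case: p1; case: p2; rewrite /= ?mulmx1 ?mul1mx.
- set Y := Xmx *m Pmx nu *m Xmx *m Pmx nu^*.
  have -> : Y *m Xmx *m Pmx nu *m Xmx *m Pmx nu^* = Y *m Y by rewrite /Y !mulmxA.
  have -> : Y = diag2 (fun b => if b then nu^* else nu).
    by rewrite /Y Xmx_diag2 mul_diag2; apply: eq_diag2 => -[] /=; rewrite ?mulr1 ?mul1r.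
  by rewrite mul_diag2; apply: eq_diag2 => -[]; rewrite /= expr2.
all: rewrite -!mulmxA.
- by rewrite Pmx_conjK // mulmx1 (mulmxA (Pmx nu)) Pmx_conjK // mul1mx XmxK.
- by rewrite (mulmxA (Pmx nu^*)) Pmx_conjKV // mul1mx (mulmxA Xmx) XmxK mul1mx Pmx_conjK.
- by rewrite Pmx_conjK // mulmx1 Pmx_conjK.
Qed.

Definition Hmx := let h := (sqrtC 2)^-1 in mx2 (fun a b => if a && b then - h else h).

Lemma sqrtC2_half : (sqrtC 2)^-1 * (sqrtC 2)^-1 *+ 2 = 1 :> C.
Proof. by rewrite -invfM -expr2 sqrtCK -mulr_natr mulVf // pnatr_eq0. Qed.

Lemma HmxK : Hmx *m Hmx = 1%:M.
Proof.
apply: mx2P => a b; rewrite ent_mul !ent_mx2 ent1 -[in RHS]sqrtC2_half.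
by case: a; case: b; rewrite /= ?mulr1n ?mulr0n; ring.
Qed.

Lemma Hmx_unitary : Hmx \is unitarymx.
Proof.
apply/unitarymxP; suff -> : Hmx ^t* = Hmx by exact: HmxK.
have real_h : (sqrtC 2)^-1 \is @Num.real C by rewrite realV sqrtC_real // ler0n.
apply: mx2P => a b; rewrite ent_tr !ent_mx2.
by case: a; case: b; apply: conj_Creal; rewrite /= ?rpredN.
Qed.

Lemma Hmx_diag2 k : Hmx *m diag2 (fun b => if b then - k else k) *m Hmx = k *: Xmx.
Proof.
apply: mx2P => a b; rewrite !ent_mul entZ !ent_mx2.
have := sqrtC2_half; set h := (sqrtC 2)^-1 => h2.
by case: a; case: b; rewrite /= ?mulr1n ?mulr0n; first [ring | rewrite -[in RHS]h2; ring].
Qed.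

Lemma unitary_normalmx n (U : 'M[C]_n) : U \is unitarymx -> U \is normalmx.
Proof. by move/unitarymxP => UU; apply/normalmxP; rewrite UU (mulmx1C UU). Qed.

Lemma unitary2_decomposition (U : 'M[C]_2) : U \is unitarymx ->
  exists P mu ka, [/\ P \is unitarymx, unimodular mu, unimodular ka &
    U = mu *: (P^t* *m diag2 (fun b => if b then ka^* else ka) *m P)].
Proof.
move=> uU; set P := spectralmx U; pose d b := spectral_diag U ord0 (b2o b).
have uP : P \is unitarymx := spectral_unitarymx U.
have EU : U = P^t* *m diag2 d *m P.
  rewrite -invmx_unitary; last exact: uP.
  have /orthomx_spectralP {1}-> := unitary_normalmx uU.
  congr (_ *m _ *m _); apply: mx2P => a b.
  by rewrite ent_mx2 /ent mxE (inj_eq b2o_inj) mulr_natl.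
have ud b : unimodular (d b).
  apply: diag2_unimodular; have -> : diag2 d = P *m U *m P^t*.
    by rewrite EU !mulmxA (unitarymxP uP) mul1mx -mulmxA (unitarymxP uP) mulmx1.
  by apply: mul_unitarymx; [exact: mul_unitarymx uP uU | rewrite trmxC_unitary].
set mu := sqrtC (d false * d true).
have umu : unimodular mu by apply/unimodular_sqrt/unimodularM.
exists P, mu, (d false * mu^*); split=> //; first exact/unimodularM/unimodular_conj.
rewrite {1}EU scalemxAl scalemxAr; congr (_ *m _ *m _).
apply: mx2P => a b; rewrite entZ !ent_mx2 mulrCA; congr (_ * _).
case: a; rewrite /= ?rmorphM /= ?conjCK mulrCA; last by rewrite umu mulr1.
by rewrite -expr2 sqrtCK mulrA [_^* * _]mulrC ud mul1r.
Qed.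

(** * Matrices indexed by basis states *)

Section States.
Variable n : nat.

Definition state := {ffun 'I_n -> bool}.
Definition bits (x : 'I_(2 ^ n)) : state := [ffun k : 'I_n => qbit x k].

Lemma bits_inj : injective bits.
Proof.
move=> x y eq_xy; apply/val_inj/(@qbit_inj n); try exact: ltn_ord.
by move=> k ltkn; have := congr1 (fun f : state => f (Ordinal ltkn)) eq_xy; rewrite !ffunE.
Qed.

Lemma bits_bij : bijective bits.
Proof. by apply: (inj_card_bij bits_inj); rewrite card_ffun !card_ord card_bool. Qed.

Implicit Types (t k : 'I_n) (s v w : state).

Definition state_mx (F : state -> state -> C) : 'M[C]_(2 ^ n) :=
  \matrix_(x, y) F (bits x) (bits y).

Lemma eq_state_mx F G : (forall s v, F s v = G s v) -> state_mx F = state_mx G.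
Proof. by move=> eqFG; apply/matrixP => x y; rewrite !mxE eqFG. Qed.

Lemma mul_state_mx F G :
  state_mx F *m state_mx G = state_mx (fun s v => \sum_w F s w * G w v).
Proof.
apply/matrixP => x y; rewrite !mxE.
rewrite [RHS](reindex bits); last exact/onW_bij/bits_bij.
by apply: eq_bigr => z _; rewrite !mxE.
Qed.

Definition flip t b v : state := [ffun k => v k (+) (b && (k == t))].
Definition set_bit t b v : state := [ffun k => if k == t then b else v k].
Definition agree_off t s v := [forall k, (k != t) ==> (s k == v k)].

Definition classical_mx (f : state -> state) := state_mx (fun s v => (s == f v)%:R).
Definition phase_mx (phi : state -> C) := state_mx (fun s v => (s == v)%:R * phi v).
(* [ctrl_mx t F] applies [F v] to qubit [t], where [v] is the state of the
   other qubits (read with [t] reset to 0). *)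
Definition ctrl_mx t (F : state -> 'M[C]_2) := state_mx (fun s v =>
  if agree_off t s v then ent (F (set_bit t false v)) (s t) (v t) else 0).

Lemma flipE t b v k : flip t b v k = v k (+) (b && (k == t)).
Proof. by rewrite ffunE. Qed.

Lemma flip_at t b v : flip t b v t = v t (+) b.
Proof. by rewrite flipE eqxx andbT. Qed.

Lemma flip_ne t k b v : k != t -> flip t b v k = v k.
Proof. by move=> neq_kt; rewrite flipE (negbTE neq_kt) andbF addbF. Qed.

Lemma flip_flip t b c v : flip t b (flip t c v) = flip t (b (+) c) v.
Proof.
apply/ffunP => k; rewrite !flipE.
by case: (k == t); rewrite ?andbT ?andbF ?addbF //; case: (v k); case: b; case: c.
Qed.

Lemma flipK t b : involutive (flip t b).
Proof. by move=> v; rewrite flip_flip addbb; apply/ffunP => k; rewrite flipE addbF. Qed.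

Lemma flipC t k b c v : flip t b (flip k c v) = flip k c (flip t b v).
Proof. by apply/ffunP => j; rewrite !flipE addbAC. Qed.

Lemma set_bitE t b v k : set_bit t b v k = if k == t then b else v k.
Proof. by rewrite ffunE. Qed.

Lemma set_bit_at t b v : set_bit t b v t = b.
Proof. by rewrite set_bitE eqxx. Qed.

Lemma set_bit_ne t k b v : k != t -> set_bit t b v k = v k.
Proof. by move=> neq_kt; rewrite set_bitE (negbTE neq_kt). Qed.

Lemma set_bitK t b c v : set_bit t b (set_bit t c v) = set_bit t b v.
Proof. by apply/ffunP => k; rewrite !set_bitE; case: eqP. Qed.

Lemma set_bit_id t v : set_bit t (v t) v = v.
Proof. by apply/ffunP => k; rewrite set_bitE; case: eqP => // ->. Qed.

Lemma agree_offP t s v : reflect (forall k, k != t -> s k = v k) (agree_off t s v).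
Proof.
apply: (iffP forallP) => [eq_sv k neq_kt|eq_sv k]; last by apply/implyP => /eq_sv ->.
by have /implyP/(_ neq_kt)/eqP := eq_sv k.
Qed.

Lemma agree_offC t s v : agree_off t s v = agree_off t v s.
Proof. by apply/agree_offP/agree_offP => eq_sv k /eq_sv. Qed.

Lemma agree_off_trans t w s v : agree_off t s w -> agree_off t w v -> agree_off t s v.
Proof.
by move=> /agree_offP eq_sw /agree_offP eq_wv; apply/agree_offP => k nkt; rewrite eq_sw ?eq_wv.
Qed.

Lemma agree_off_set_bit t b v : agree_off t (set_bit t b v) v.
Proof. by apply/agree_offP => k; apply: set_bit_ne. Qed.

Lemma agree_off_set_bitl t b s v : agree_off t (set_bit t b s) v = agree_off t s v.
Proof.
apply/idP/idP; last exact: agree_off_trans (agree_off_set_bit _ _ _).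
by apply: agree_off_trans; rewrite agree_offC agree_off_set_bit.
Qed.

Lemma agree_off_eq t s v : agree_off t s v -> s = set_bit t (s t) v.
Proof.
move=> /agree_offP eq_sv; apply/ffunP => k; rewrite set_bitE.
by case: eqP => [->|/eqP /eq_sv].
Qed.

Lemma agree_off_eqE t s v : agree_off t s v -> (s == v) = (s t == v t).
Proof.
move=> agree_sv; apply/eqP/eqP => [-> //|eq_t].
by rewrite (agree_off_eq agree_sv) eq_t set_bit_id.
Qed.

Lemma sum_agree_off t v (h : state -> C) :
  \sum_w (if agree_off t w v then h w else 0) = h (set_bit t false v) + h (set_bit t true v).
Proof.
have neq_tf : set_bit t true v != set_bit t false v.
  by apply/eqP => /(congr1 (fun f : state => f t)); rewrite !set_bit_at.
rewrite (bigD1 (set_bit t false v)) ?agree_off_set_bit //= (bigD1 (set_bit t true v)) /=.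
  rewrite agree_off_set_bit big1 ?addr0 // => w /andP[neq_wf neq_wt].
  case: ifP => // /agree_off_eq eq_w; rewrite eq_w in neq_wf neq_wt.
  by case: (w t) neq_wf neq_wt; rewrite eqxx.
exact: neq_tf.
Qed.

Lemma mul_classical_mx f g : classical_mx f *m classical_mx g = classical_mx (f \o g).
Proof.
rewrite mul_state_mx; apply: eq_state_mx => s v.
rewrite (bigD1 (g v)) //= eqxx mulr1 big1 ?addr0 // => w /negPf ->.
by rewrite mulr0.
Qed.

Lemma eq_classical_mx f g : f =1 g -> classical_mx f = classical_mx g.
Proof. by move=> eq_fg; apply: eq_state_mx => s v; rewrite eq_fg. Qed.

Lemma mul_phase_state_mx phi G :
  phase_mx phi *m state_mx G = state_mx (fun s v => phi s * G s v).
Proof.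
rewrite mul_state_mx; apply: eq_state_mx => s v.
rewrite (bigD1 s) //= eqxx mul1r big1 ?addr0 // => w /negPf.
by rewrite eq_sym => ->; rewrite !mul0r.
Qed.

Lemma mul_phase_mx phi psi : phase_mx phi *m phase_mx psi = phase_mx (phi \* psi).
Proof.
rewrite mul_phase_state_mx; apply: eq_state_mx => s v /=.
by case: eqP => [->|]; rewrite ?mul1r ?mul0r ?mulr0.
Qed.

Lemma eq_phase_mx phi psi : phi =1 psi -> phase_mx phi = phase_mx psi.
Proof. by move=> eq_phi; apply: eq_state_mx => s v; rewrite eq_phi. Qed.

Lemma phase_mx1 : phase_mx (fun=> 1) = 1%:M.
Proof. by apply/matrixP => x y; rewrite !mxE mulr1 (inj_eq bits_inj). Qed.

Lemma eq_ctrl_mx t F G : (forall v, F (set_bit t false v) = G (set_bit t false v)) ->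
  ctrl_mx t F = ctrl_mx t G.
Proof. by move=> eqFG; apply: eq_state_mx => s v; rewrite eqFG. Qed.

Lemma mul_ctrl_mx t F G : ctrl_mx t F *m ctrl_mx t G = ctrl_mx t (fun v => F v *m G v).
Proof.
rewrite mul_state_mx; apply: eq_state_mx => s v.
rewrite (eq_bigr (fun w => if agree_off t w v then
   (if agree_off t s w then ent (F (set_bit t false w)) (s t) (w t) *
      ent (G (set_bit t false v)) (w t) (v t) else 0) else 0)); last first.
  by move=> w _; case: (agree_off t w v); case: (agree_off t s w); rewrite ?mulr0 ?mul0r.
rewrite sum_agree_off !(agree_offC t s) !set_bitK !set_bit_at !agree_off_set_bitl.
by case: (agree_off t v s); rewrite ?addr0 // ent_mul.
Qed.

Lemma gate_mx_CNOT c t (neq_ct : c != t) :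
  gate_mx (CNOT neq_ct) = classical_mx (fun v => flip t (v c) v).
Proof.
apply/matrixP => x y; rewrite !mxE; congr (nat_of_bool _)%:R.
have cnot_bit k : (if (k == t) && qbit y c then ~~ qbit y k else qbit y k)
    = flip t (bits y c) (bits y) k.
  by rewrite !ffunE; case: (k == t); case: (qbit y c); case: (qbit y k).
apply/forallP/eqP => [eq_xy|eq_xy k]; last by rewrite cnot_bit -eq_xy ffunE.
by apply/ffunP => k; have /eqP := eq_xy k; rewrite cnot_bit [bits x k]ffunE.
Qed.

Lemma gate_mx_Single q u (unit_u : u \is unitarymx) :
  gate_mx (Single q unit_u) = ctrl_mx q (fun=> u).
Proof.
apply/matrixP => x y; rewrite !mxE /ent !ffunE.
by congr (if _ then _ else _); apply: eq_forallb => k; rewrite !ffunE.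
Qed.

Lemma classical_flip_ctrl t (p : state -> bool) : (forall v b, p (set_bit t b v) = p v) ->
  classical_mx (fun v => flip t (p v) v) = ctrl_mx t (fun v => if p v then Xmx else 1%:M).
Proof.
move=> p_off_t; apply: eq_state_mx => s v; rewrite p_off_t.
have [agree_sv|disagree_sv] := boolP (agree_off t s v).
  have -> : (s == flip t (p v) v) = (s t == v t (+) p v).
    rewrite (agree_off_eqE (t := t)) ?flip_at //.
    by apply: agree_off_trans agree_sv _; apply/agree_offP => k /flip_ne ->.
  by case: (p v); rewrite ?ent_mx2 ?ent1; case: (s t); case: (v t).
case: eqP => // eq_s; case/negP: disagree_sv; rewrite eq_s.
by apply/agree_offP => k /flip_ne ->.
Qed.

Lemma phase_ctrl_mx t phi :
  phase_mx phi = ctrl_mx t (fun v => diag2 (fun b => phi (set_bit t b v))).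
Proof.
apply: eq_state_mx => s v; rewrite ent_mx2 set_bitK.
have [agree_sv|disagree_sv] := boolP (agree_off t s v).
  by rewrite (agree_off_eqE agree_sv); case: eqP => [->|]; rewrite ?set_bit_id ?mul0r.
case: eqP => [eq_sv|]; last by rewrite mul0r.
by case/negP: disagree_sv; rewrite eq_sv; apply/agree_offP.
Qed.

Lemma ctrl_diag2 t (f : state -> bool -> C) :
  ctrl_mx t (fun v => diag2 (f v)) = phase_mx (fun v => f (set_bit t false v) (v t)).
Proof.
rewrite (phase_ctrl_mx t); apply: eq_ctrl_mx => v.
by apply: eq_diag2 => b /=; rewrite !set_bitK set_bit_at.
Qed.

End States.

(** * Circuits *)

(* Smart constructors: ill-formed gates (equal control and target, non-unitary
   matrix) are dropped, so that circuits can be written without proof terms. *)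
HB.lock Definition cx n (q t : 'I_n) : circuit n :=
  if (q != t) =P true is ReflectT neq_qt then [:: CNOT neq_qt] else [::].

HB.lock Definition ugate n (q : 'I_n) (u : 'M[C]_2) : circuit n :=
  if (u \is unitarymx) =P true is ReflectT unit_u then [:: Single q unit_u] else [::].

(* If [c1], [c2] act on [t] as X^p1, X^p2, this is the squared commutator
   (X^p1 Pmx(nu) X^p2 Pmx(nu^* ))^2 of [comm_word_mx2]: the phases cancel
   unless both controls fire. *)
HB.lock Definition comm_word n (t : 'I_n) (c1 c2 : circuit n) (nu : C) : circuit n :=
  ugate t (Pmx nu^*) ++ c2 ++ ugate t (Pmx nu) ++ c1 ++
  ugate t (Pmx nu^*) ++ c2 ++ ugate t (Pmx nu) ++ c1.

Section Circuits.
Variable n : nat.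
Implicit Types (t q : 'I_n) (c : circuit n).

Lemma circuit_mx_cat c1 c2 : circuit_mx (c1 ++ c2) = circuit_mx c2 *m circuit_mx c1.
Proof. by elim: c1 => [|g c1 IH] /=; rewrite ?mulmx1 // IH mulmxA. Qed.

Lemma cnot_count_cat c1 c2 : cnot_count (c1 ++ c2) = (cnot_count c1 + cnot_count c2)%N.
Proof. exact: count_cat. Qed.

Lemma cx_mx q t : q != t -> circuit_mx (cx q t) = classical_mx (fun v => flip t (v q) v).
Proof.
by rewrite cx.unlock; case: eqP => // neq_qt _; exact: etrans (mul1mx _) (gate_mx_CNOT _).
Qed.

Lemma ugate_mx q u : u \is unitarymx -> circuit_mx (ugate q u) = ctrl_mx q (fun=> u).
Proof.
by rewrite ugate.unlock; case: eqP => // unit_u _; exact: etrans (mul1mx _) (gate_mx_Single _ _).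
Qed.

Lemma cnot_count_cx q t : (cnot_count (cx q t) <= 1)%N.
Proof. by rewrite cx.unlock; case: eqP. Qed.

Lemma cnot_count_ugate q u : cnot_count (ugate q u) = 0%N.
Proof. by rewrite ugate.unlock; case: eqP. Qed.

Lemma ugate_Xmx_mx t : circuit_mx (ugate t Xmx) = classical_mx (flip t true).
Proof.
by rewrite ugate_mx ?Xmx_unitary // -(classical_flip_ctrl (p := fun=> true)).
Qed.

Lemma cnot_count_comm_word t c1 c2 nu :
  cnot_count (comm_word t c1 c2 nu) = (2 * cnot_count c1 + 2 * cnot_count c2)%N.
Proof. rewrite comm_word.unlock !cnot_count_cat !cnot_count_ugate; lia. Qed.

Lemma comm_word_mx t c1 c2 nu (p1 p2 : state n -> bool) : unimodular nu ->
  (forall v b, p1 (set_bit t b v) = p1 v) -> (forall v b, p2 (set_bit t b v) = p2 v) ->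
  circuit_mx c1 = classical_mx (fun v => flip t (p1 v) v) ->
  circuit_mx c2 = classical_mx (fun v => flip t (p2 v) v) ->
  circuit_mx (comm_word t c1 c2 nu) = ctrl_mx t (fun v =>
    if p1 v && p2 v then diag2 (fun b => if b then nu^* ^+ 2 else nu ^+ 2) else 1%:M).
Proof.
move=> unu p1_off p2_off c1_mx c2_mx.
have unitP : Pmx nu \is unitarymx by exact: Pmx_unitary.
have unitPV : Pmx nu^* \is unitarymx by exact/Pmx_unitary/unimodular_conj.
rewrite comm_word.unlock !circuit_mx_cat c1_mx c2_mx !(ugate_mx _ unitP) !(ugate_mx _ unitPV).
rewrite !classical_flip_ctrl // !mul_ctrl_mx; apply: eq_ctrl_mx => v.
exact: comm_word_mx2.
Qed.

End Circuits.

Definition ccix n (a b t : 'I_n) : circuit n :=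
  ugate t Hmx ++ comm_word t (cx a t) (cx b t) (sqrtC (- 'i)) ++ ugate t Hmx.

Definition ccphase n (a b : 'I_n) : circuit n :=
  ugate a (Pmx (sqrtC 'i)) ++ comm_word b (cx a b) (ugate b Xmx) (sqrtC (sqrtC 'i)^*).

HB.lock Definition toffoli n (a b t : 'I_n) : circuit n := ccix a b t ++ ccphase a b.

Section Toffoli.
Variable n : nat.
Implicit Types (a b t : 'I_n).

Lemma ccix_mx a b t : a != t -> b != t ->
  circuit_mx (ccix a b t) = ctrl_mx t (fun v => if v a && v b then - 'i *: Xmx else 1%:M).
Proof.
move=> neq_at neq_bt.
have u_nu : unimodular (sqrtC (- 'i)) by apply/unimodular_sqrt/unimodularN/unimodular_i.
rewrite /ccix !circuit_mx_cat (ugate_mx _ Hmx_unitary).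
rewrite (comm_word_mx (p1 := fun v => v a) (p2 := fun v => v b)) ?cx_mx //; last 2 first.
- by move=> v c; rewrite set_bit_ne.
- by move=> v c; rewrite set_bit_ne.
rewrite !mul_ctrl_mx; apply: eq_ctrl_mx => v.
case: (_ && _); last by rewrite mulmx1 HmxK.
rewrite -Hmx_diag2; congr (_ *m _ *m _); apply: eq_diag2 => -[]; rewrite /= ?sqrtCK //.
by rewrite -rmorphXn /= sqrtCK -conjCi conjCK conjCi opprK.
Qed.

Lemma ccphase_mx a b : a != b ->
  circuit_mx (ccphase a b) = phase_mx (fun v => if v a && v b then 'i else 1).
Proof.
move=> neq_ab.
have u_om : unimodular (sqrtC 'i) by apply/unimodular_sqrt/unimodular_i.
have u_nu : unimodular (sqrtC (sqrtC 'i)^*) by apply/unimodular_sqrt/unimodular_conj.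
rewrite /ccphase !circuit_mx_cat (ugate_mx _ (Pmx_unitary u_om)).
rewrite (comm_word_mx (p1 := fun v => v a) (p2 := fun=> true)) ?cx_mx ?ugate_Xmx_mx //; last first.
  by move=> v c; rewrite set_bit_ne.
rewrite (eq_ctrl_mx (G := fun v => diag2 (fun x =>
  if v a then (if x then (sqrtC (sqrtC 'i)^*)^* ^+ 2 else sqrtC (sqrtC 'i)^* ^+ 2) else 1))).
  rewrite !ctrl_diag2 mul_phase_mx; apply: eq_phase_mx => v /=; rewrite set_bit_ne //.
  rewrite -rmorphXn /= !sqrtCK conjCK.
  by case: (v a); case: (v b); rewrite ?mul1r // ?(mulrC _^*) ?u_om // -expr2 sqrtCK.
by move=> v; rewrite andbT; case: (_ a); rewrite ?diag2_1.
Qed.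

Lemma toffoli_mx a b t : a != b -> a != t -> b != t ->
  circuit_mx (toffoli a b t) = classical_mx (fun v => flip t (v a && v b) v).
Proof.
move=> neq_ab neq_at neq_bt.
rewrite toffoli.unlock circuit_mx_cat ccix_mx // ccphase_mx // (phase_ctrl_mx t) mul_ctrl_mx.
rewrite classical_flip_ctrl => [|v c]; last by rewrite !set_bit_ne.
apply: eq_ctrl_mx => v; rewrite !set_bit_ne //.
rewrite (eq_diag2 (g := fun=> if v a && v b then 'i else 1)) => [|x]; last by rewrite !set_bit_ne.
rewrite diag2_const; case: (_ && _); rewrite ?scale1r ?mul1mx //.
by rewrite -scalemxAl mul1mx scalerA mulrN -expr2 sqrCi opprK scale1r.
Qed.

Lemma cnot_count_toffoli a b t : (cnot_count (toffoli a b t) <= 6)%N.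
Proof.
rewrite toffoli.unlock /ccix /ccphase !cnot_count_cat !cnot_count_comm_word !cnot_count_ugate.
by have := cnot_count_cx a t; have := cnot_count_cx b t; have := cnot_count_cx a b; lia.
Qed.

End Toffoli.

(** * Multi-controlled gates *)

Definition all_set n (xs : seq 'I_n) (v : state n) := all (fun x => v x) xs.

(* The V-chain of Barenco et al. with dirty ancillas [an]: their initial
   state is arbitrary, and they are left garbled. *)
Fixpoint vchain n (xs an : seq 'I_n) (t : 'I_n) : circuit n :=
  match xs, an with
  | [:: x], _ => cx x t
  | x :: xs', a :: an' => toffoli x a t ++ vchain xs' an' a ++ toffoli x a t
  | _, _ => [::]
  end.

Section VChain.
Variable n : nat.
Implicit Types (t q x a : 'I_n) (v w : state n) (xs an : seq 'I_n) (f : state n -> state n).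

Lemma all_set_set_bit xs t b v : t \notin xs -> all_set xs (set_bit t b v) = all_set xs v.
Proof.
by move=> t_xs; apply: eq_in_all => x x_xs; rewrite set_bit_ne //; apply: contraNneq t_xs => <-.
Qed.

Lemma vchain_cons x x1 xs a an t : vchain [:: x, x1 & xs] (a :: an) t =
  toffoli x a t ++ vchain (x1 :: xs) an a ++ toffoli x a t.
Proof. by []. Qed.

Definition vchain_spec f xs an t :=
  [/\ involutive f,
      forall v, f v t = v t (+) all_set xs v,
      forall q, q \notin t :: xs ++ an ->
        (forall b v, f (flip q b v) = flip q b (f v)) /\ (forall v, f v q = v q) &
      forall x v, x \in xs -> f v x = v x].

Lemma vchain_spec_cx x t an : x != t -> vchain_spec (fun v => flip t (v x) v) [:: x] an t.
Proof.
move=> neq_xt; split.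
- by move=> v; rewrite flip_ne // flipK.
- by move=> v; rewrite flip_at /all_set /= andbT.
- move=> q; rewrite !inE !negb_or => /and3P[neq_qt neq_qx _].
  split=> [b v|v]; last exact: flip_ne.
  by rewrite flip_ne 1?eq_sym // flipC.
- by move=> y v; rewrite inE => /eqP ->; rewrite flip_ne.
Qed.

Lemma vchain_spec_step f x a t xs an :
  x != t -> t \notin a :: xs ++ an -> x \notin a :: xs ++ an -> vchain_spec f xs an a ->
  let T v := flip t (v x && v a) v in
  vchain_spec (fun v => T (f (T v))) (x :: xs) (a :: an) t.
Proof.
move=> neq_xt t_out x_out [fK f_a f_out f_xs] T.
have [ft_comm ft_fix] := f_out t t_out.
have [_ fx_fix] := f_out x x_out.
have neq_at : a != t by apply: contraNneq t_out => ->; rewrite mem_head.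
have t_xs : t \notin xs by apply: contra t_out; rewrite inE mem_cat => ->; rewrite orbT.
have TK : involutive T by move=> v; rewrite /T !flip_ne // flipK.
have fTx v : f (T v) x = v x by rewrite ft_comm flip_ne // fx_fix.
have fTa v : f (T v) a = v a (+) all_set xs v by rewrite ft_comm flip_ne // f_a.
split.
- by move=> v; rewrite TK fK TK.
- move=> v; rewrite /T flip_at fTx fTa ft_comm flip_at ft_fix /all_set /= -/(all_set xs v).
  by case: (v t); case: (v x); case: (v a); case: (all_set xs v).
- move=> q; rewrite !(inE, mem_cat) !negb_or.
  move=> /and3P[neq_qt neq_qx /and3P[q_xs neq_qa q_an]].
  have q_out : q \notin a :: xs ++ an by rewrite !(inE, mem_cat) !negb_or neq_qa q_xs.
  have [fq_comm fq_fix] := f_out q q_out.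
  have Tq_comm b v : T (flip q b v) = flip q b (T v).
    by rewrite /T !flip_ne 1?eq_sym // flipC.
  split=> [b v|v]; first by rewrite Tq_comm fq_comm Tq_comm.
  by rewrite /T flip_ne // fq_fix flip_ne.
- move=> y v; rewrite inE => /orP[/eqP->|y_xs]; first by rewrite /T flip_ne // fTx.
  have neq_yt : y != t by apply: contraNneq t_xs => <-.
  by rewrite /T flip_ne // ft_comm flip_ne // f_xs.
Qed.

Lemma uniq_ancilla_step x a t xs an : uniq (t :: (x :: xs) ++ a :: an) ->
  [/\ x != t, t \notin a :: xs ++ an, x \notin a :: xs ++ an & uniq (a :: xs ++ an)].
Proof.
have perm_a : perm_eq (xs ++ a :: an) (a :: xs ++ an) := permEl (perm_catCA xs [:: a] an).
rewrite -(perm_uniq perm_a) -!(perm_mem perm_a) cat_cons !cons_uniq.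
case/and3P=> t_notin x_out uniq_a; split=> //.
- by apply: contraNneq t_notin => ->; rewrite mem_head.
- by apply: contra t_notin; rewrite inE => ->; rewrite orbT.
Qed.

Lemma vchain_mx xs an t : (0 < size xs <= size an + 1)%N -> uniq (t :: xs ++ an) ->
  exists2 f, circuit_mx (vchain xs an t) = classical_mx f & vchain_spec f xs an t.
Proof.
elim: xs an t => [|x xs IH] an t //.
case: xs IH => [|x1 xs] IH size_xs uniq_t.
  have neq_xt : x != t by apply: contraTneq uniq_t => ->; rewrite /= inE eqxx.
  by exists (fun v => flip t (v x) v); [exact: cx_mx | exact: vchain_spec_cx].
case: an size_xs uniq_t => [|a an] // size_xs uniq_t.
rewrite vchain_cons; set xs' := x1 :: xs in IH size_xs uniq_t *.
have size_xs' : (0 < size xs' <= size an + 1)%N by move: size_xs; rewrite /= !addSn.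
have [neq_xt t_out x_out uniq_a] := uniq_ancilla_step uniq_t.
have [f f_mx f_spec] := IH an a size_xs' uniq_a.
have neq_at : a != t by apply: contraNneq t_out => ->; rewrite mem_head.
have neq_xa : x != a by apply: contraNneq x_out => ->; rewrite mem_head.
exists (fun v => let T w := flip t (w x && w a) w in T (f (T v))).
  by rewrite !circuit_mx_cat f_mx toffoli_mx // !mul_classical_mx.
exact: vchain_spec_step.
Qed.

Lemma cnot_count_vchain xs an t : (cnot_count (vchain xs an t) <= 12 * size xs)%N.
Proof.
elim: xs an t => [|x xs IH] an t //.
case: xs IH => [|x1 xs] IH; first exact: leq_trans (cnot_count_cx x t) _.
case: an => [|a an] //; rewrite vchain_cons !cnot_count_cat.
by have := IH an a; have := cnot_count_toffoli x a t; rewrite /=; lia.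
Qed.

End VChain.

HB.lock Definition mcx n (xs an : seq 'I_n) (t : 'I_n) : circuit n :=
  match xs, an with
  | [::], _ => ugate t Xmx
  | [:: x], _ => cx x t
  | x :: xs', a :: an' =>
      toffoli x a t ++ vchain xs' an' a ++ toffoli x a t ++ vchain xs' an' a
  | _, _ => [::]
  end.

Section MCX.
Variable n : nat.
Implicit Types (t x a : 'I_n) (v : state n) (xs an : seq 'I_n) (f : state n -> state n).

(* The second V-chain undoes the garbage left on the ancillas by the first. *)
Lemma vchain_spec_twice f x a t xs an :
  x != t -> t \notin a :: xs ++ an -> x \notin a :: xs ++ an -> vchain_spec f xs an a ->
  let T v := flip t (v x && v a) v in
  forall v, f (T (f (T v))) = flip t (all_set (x :: xs) v) v.
Proof.
move=> neq_xt t_out x_out [fK f_a f_out _] T v.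
have [ft_comm _] := f_out t t_out.
have [_ fx_fix] := f_out x x_out.
have neq_at : a != t by apply: contraNneq t_out => ->; rewrite mem_head.
have fT w : f (T w) = flip t (w x && w a) (f w) by exact: ft_comm.
rewrite fT fK !fT !flip_ne // fx_fix f_a /T flip_flip; congr flip.
by rewrite /all_set /= -/(all_set xs v); case: (v x); case: (v a); case: (all_set xs v).
Qed.

Lemma mcx_mx xs an t : (size xs <= size an + 1)%N -> uniq (t :: xs ++ an) ->
  circuit_mx (mcx xs an t) = classical_mx (fun v => flip t (all_set xs v) v).
Proof.
rewrite mcx.unlock; case: xs => [|x [|x1 xs]] size_xs uniq_t.
- exact: ugate_Xmx_mx.
- have neq_xt : x != t by apply: contraTneq uniq_t => ->; rewrite /= inE eqxx.
  by rewrite cx_mx //; apply: eq_classical_mx => v; rewrite /all_set /= andbT.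
case: an size_xs uniq_t => [|a an] // size_xs uniq_t.
have [neq_xt t_out x_out uniq_a] := uniq_ancilla_step uniq_t.
have size_xs' : (0 < size (x1 :: xs) <= size an + 1)%N by move: size_xs; rewrite /= !addSn.
have [f f_mx f_spec] := vchain_mx size_xs' uniq_a.
have neq_at : a != t by apply: contraNneq t_out => ->; rewrite mem_head.
have neq_xa : x != a by apply: contraNneq x_out => ->; rewrite mem_head.
rewrite !circuit_mx_cat f_mx toffoli_mx // !mul_classical_mx.
by apply: eq_classical_mx => v /=; exact: (vchain_spec_twice neq_xt t_out x_out f_spec).
Qed.

Lemma cnot_count_mcx xs an t : (cnot_count (mcx xs an t) <= 24 * size xs)%N.
Proof.
rewrite mcx.unlock; case: xs => [|x [|x1 xs]]; first by rewrite cnot_count_ugate.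
  exact: leq_trans (cnot_count_cx x t) _.
case: an => [|a an] //; rewrite !cnot_count_cat.
have := cnot_count_vchain (x1 :: xs) an a; have := cnot_count_toffoli x a t.
by rewrite /=; lia.
Qed.

End MCX.

Definition mcw n (S : seq 'I_n) (t : 'I_n) (nu : C) : circuit n :=
  let h := uphalf (size S) in
  comm_word t (mcx (take h S) (drop h S) t) (mcx (drop h S) (take h S) t) nu.

Section MCW.
Variable n : nat.
Implicit Types (t : 'I_n) (S : seq 'I_n).

Lemma size_halves S : let h := uphalf (size S) in
  [/\ size (take h S) <= size (drop h S) + 1, size (drop h S) <= size (take h S) + 1
     & size (take h S) + size (drop h S) = size S]%N.
Proof.
rewrite /= -size_cat cat_take_drop size_take size_drop uphalf_half.
have := odd_double_half (size S); rewrite -addnn.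
by case: (odd _) => /= sizeS; case: ltnP => ?; split; lia.
Qed.

Lemma cnot_count_mcw S t nu : (cnot_count (mcw S t nu) <= 48 * size S)%N.
Proof.
rewrite /mcw cnot_count_comm_word; have [_ _ sizeS] := size_halves S.
have := cnot_count_mcx (take (uphalf (size S)) S) (drop (uphalf (size S)) S) t.
have := cnot_count_mcx (drop (uphalf (size S)) S) (take (uphalf (size S)) S) t.
lia.
Qed.

Lemma mcw_mx S t nu : uniq (t :: S) -> unimodular nu ->
  circuit_mx (mcw S t nu) = ctrl_mx t (fun v =>
    if all_set S v then diag2 (fun b => if b then nu^* ^+ 2 else nu ^+ 2) else 1%:M).
Proof.
move=> uniq_tS unu; rewrite /mcw; set h := uphalf (size S).
have [size_td size_dt _] := size_halves S.
have t_S : t \notin S by case/andP: uniq_tS.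
have uniq_td : uniq (t :: take h S ++ drop h S) by rewrite cat_take_drop.
have uniq_dt : uniq (t :: drop h S ++ take h S).
  by rewrite cons_uniq mem_cat orbC -mem_cat uniq_catC cat_take_drop -cons_uniq.
rewrite (comm_word_mx (p1 := all_set (take h S)) (p2 := all_set (drop h S))) ?mcx_mx //.
- by apply: eq_ctrl_mx => v; rewrite /all_set -all_cat cat_take_drop.
- by move=> v b; rewrite all_set_set_bit //; apply: contra t_S; apply: mem_take.
- by move=> v b; rewrite all_set_set_bit //; apply: contra t_S; apply: mem_drop.
Qed.

End MCW.

Definition sqrt_rhp (l : C) := if 0 <= 'Re (sqrtC l) then sqrtC l else - sqrtC l.

Lemma sqrt_rhpK l : sqrt_rhp l ^+ 2 = l.
Proof. by rewrite /sqrt_rhp; case: ifP; rewrite ?sqrrN sqrtCK. Qed.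

Lemma unimodular_sqrt_rhp l : unimodular l -> unimodular (sqrt_rhp l).
Proof.
by move=> ul; rewrite /sqrt_rhp; case: ifP => _; [|apply: unimodularN]; apply: unimodular_sqrt.
Qed.

Lemma Re_sqrt_rhp_ge0 l : 0 <= 'Re (sqrt_rhp l).
Proof.
rewrite /sqrt_rhp; case: ifP => // Re_lt0; rewrite raddfN oppr_ge0 /=.
by rewrite ltW // real_ltNge ?Re_lt0 ?Creal_Re ?real0.
Qed.

(* Halving the angle of a point of the unit circle in the right half-plane
   at least halves its squared distance to 1: |r^2 - 1|^2 = |r - 1|^2 |r + 1|^2
   with |r + 1|^2 = 2 + 2 Re r >= 2. *)
Lemma sqrt_rhp_dist l : unimodular l -> `|sqrt_rhp l - 1| ^+ 2 * 2 <= `|l - 1| ^+ 2.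
Proof.
move=> ul; set r := sqrt_rhp l.
have ur : unimodular r by apply: unimodular_sqrt_rhp.
have Re_r : 0 <= r + r^*.
  have := mulr_ge0 (Re_sqrt_rhp_ge0 l) (ler0n _ 2); rewrite -/r ReE.
  by rewrite -mulrA mulVf ?pnatr_eq0 // mulr1.
rewrite -(sqrt_rhpK l) -/r (_ : r ^+ 2 - 1 = (r - 1) * (r + 1)); last by ring.
rewrite normrM exprMn ler_wpM2l ?exprn_ge0 ?normr_ge0 // normCK rmorphD rmorph1 /=.
rewrite (_ : (r + 1) * (r^* + 1) = 2 + (r + r^*) + (r * r^* - 1)); last by ring.
by rewrite ur subrr addr0 lerDl.
Qed.

(* [t] carries the phase once no control is left; after [m] steps the
   remaining controlled phase is dropped. *)
Fixpoint phase_ladder n (qs : seq 'I_n) (t : 'I_n) (l : C) (m : nat) : circuit n :=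
  match qs, m with
  | [::], _ => ugate t (l *: 1%:M)
  | q :: qs', m'.+1 => mcw qs' q (sqrtC (sqrt_rhp l)^*) ++ phase_ladder qs' t (sqrt_rhp l) m'
  | _ :: _, 0 => [::]
  end.

Section PhaseLadder.
Variables (n : nat) (t : 'I_n).

Lemma cnot_count_phase_ladder qs l m :
  (cnot_count (phase_ladder qs t l m) <= 48 * size qs * m)%N.
Proof.
elim: qs l m => [|q qs IH] l [|m] //=; rewrite ?cnot_count_ugate //.
rewrite cnot_count_cat; have := cnot_count_mcw qs q (sqrtC (sqrt_rhp l)^*).
by have := IH (sqrt_rhp l) m; nia.
Qed.

Lemma phase_ladder_mx qs l m : uniq qs -> unimodular l ->
  exists2 phi, circuit_mx (phase_ladder qs t l m) = phase_mx phi &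
    forall v, `|phi v - (if all_set qs v then l else 1)| ^+ 2 * 2 ^+ m <= `|l - 1| ^+ 2.
Proof.
elim: qs l m => [|q qs IH] l m uniq_qs ul.
  exists (fun=> l); last by move=> v; rewrite subrr normr0 expr0n mul0r exprn_ge0.
  have u_l : l *: (1%:M : 'M[C]_2) \is unitarymx by rewrite -diag2_const; apply: diag2_unitary.
  by rewrite /= (ugate_mx _ u_l) -diag2_const ctrl_diag2.
case: m => [|m].
  exists (fun=> 1); first by rewrite phase_mx1.
  move=> v; rewrite expr0 mulr1; case: ifP => _; first by rewrite distrC lexx.
  by rewrite subrr normr0 expr0n exprn_ge0.
move: uniq_qs; rewrite cons_uniq => /andP[q_qs uniq_qs].
set l' := sqrt_rhp l; have ul' : unimodular l' by apply: unimodular_sqrt_rhp.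
have [phi phi_mx phi_le] := IH l' m uniq_qs ul'.
set nu := sqrtC l'^*; have unu : unimodular nu by apply/unimodular_sqrt/unimodular_conj.
pose psi v := if all_set qs v then (if v q then l' else l'^*) else 1.
exists (phi \* psi).
  rewrite [phase_ladder _ _ _ _]/= circuit_mx_cat phi_mx mcw_mx ?cons_uniq ?q_qs //.
  rewrite -mul_phase_mx; congr (_ *m _).
  rewrite (eq_ctrl_mx (G := fun v => diag2 (fun b =>
    if all_set qs v then (if b then l' else l'^*) else 1))) ?ctrl_diag2.
    by apply: eq_phase_mx => v; rewrite all_set_set_bit.
  move=> v; case: ifP => _; last by rewrite diag2_1.
  by apply: eq_diag2 => -[]; rewrite /nu -?rmorphXn /= sqrtCK ?conjCK.
move=> v; have norm_psi : `|psi v| = 1.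
  rewrite /psi; case: ifP => _; last by rewrite normr1.
  by case: ifP => _; apply: unimodular_norm; last apply: unimodular_conj.
have -> : (if all_set (q :: qs) v then l else 1) = (if all_set qs v then l' else 1) * psi v.
  rewrite /psi /all_set /= -/(all_set qs v) andbC.
  case: (all_set qs v) (v q) => [[]|[]] //=; rewrite ?mul1r //.
    by rewrite -expr2 sqrt_rhpK.
rewrite /= -mulrBl normrM norm_psi mulr1 (exprSr (2 : C) m) mulrA.
by apply: le_trans (sqrt_rhp_dist ul); rewrite ler_wpM2r ?ler0n ?phi_le.
Qed.

End PhaseLadder.

(** * Approximate decomposition of C^nU *)

Definition controls nc : seq 'I_nc.+1 := [seq widen_ord (leqnSn nc) i | i <- enum 'I_nc].

Section Controls.
Variable nc : nat.
Implicit Types (x y : 'I_(2 ^ nc)) (a b : 'I_2).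

Lemma size_controls : size (controls nc) = nc.
Proof. by rewrite size_map size_enum_ord. Qed.

Lemma widen_neq_max (i : 'I_nc) : widen_ord (leqnSn nc) i != ord_max.
Proof. by rewrite -val_eqE /= neq_ltn ltn_ord. Qed.

Lemma uniq_controls : uniq (ord_max :: controls nc).
Proof.
have widen_inj : injective (widen_ord (leqnSn nc)) by move=> i j [eq_ij]; apply: val_inj.
rewrite /= (map_inj_uniq widen_inj) enum_uniq andbT.
by apply/mapP => -[i _ eq_max]; move: (widen_neq_max i); rewrite -eq_max eqxx.
Qed.

Lemma bits_idx_max x a : bits (idx x a) ord_max = (a != ord0).
Proof. by rewrite ffunE qbit_hi. Qed.

Lemma bits_idx_widen x a (i : 'I_nc) : bits (idx x a) (widen_ord (leqnSn nc) i) = qbit x i.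
Proof. by rewrite ffunE (qbit_lo _ (ltn_ord x) (ltn_ord i)). Qed.

Lemma agree_off_idx x a y b : agree_off ord_max (bits (idx x a)) (bits (idx y b)) = (x == y).
Proof.
apply/agree_offP/eqP => [eq_xy|<- k neq_k].
  apply/val_inj/(qbit_inj (ltn_ord x) (ltn_ord y)) => k ltk.
  by have := eq_xy _ (widen_neq_max (Ordinal ltk)); rewrite !bits_idx_widen.
have ltk : (k < nc)%N by move: neq_k; rewrite -val_eqE /= => ?; have := ltn_ord k; lia.
by rewrite !ffunE !(qbit_lo _ (ltn_ord x) ltk).
Qed.

Lemma all_set_controls_idx x a :
  all_set (controls nc) (bits (idx x a)) = (val x == (2 ^ nc).-1).
Proof.
rewrite /all_set all_map; apply/allP/eqP => [all_x|x_max i _] /=.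
  apply/(qbit_all_eq_pred (ltn_ord x)) => k ltk.
  by have := all_x (Ordinal ltk) (mem_enum _ _); rewrite /= bits_idx_widen.
by rewrite bits_idx_widen; apply: (qbit_all_eq_pred (ltn_ord x)).2.
Qed.

End Controls.

Lemma approx_CnU_phase_ctrl nc (W : 'M[C]_2) mu (eps : R) (phi : state nc.+1 -> C) :
  W \is unitarymx ->
  (forall v, `|phi v - (if all_set (controls nc) v then mu else 1)| <= (eps%:C)%C) ->
  approx_CnU (mu *: W) eps (phase_mx phi *m
    ctrl_mx ord_max (fun v => if all_set (controls nc) v then W else 1%:M)).
Proof.
move=> uW phi_near; have eps_ge0 := le_trans (normr_ge0 _) (phi_near 0).
have max_ctrl : ord_max \notin controls nc by case/andP: (uniq_controls nc).
have u1 : (1%:M : 'M[C]_2) \is unitarymx by apply/unitarymxP; rewrite mul1mx trmx1 map_mx1.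
rewrite /ctrl_mx mul_phase_state_mx; split=> [x y a b neq_xy|x V a b].
  by rewrite mxE agree_off_idx (negbTE neq_xy) mulr0.
rewrite /V !mxE agree_off_idx eqxx !bits_idx_max all_set_set_bit // all_set_controls_idx.
rewrite /ent !b2oK; have := phi_near (bits (idx x a)); rewrite all_set_controls_idx.
case: eqP => _ near; [rewrite mxE | rewrite -[X in _ - X]mul1r];
  rewrite -mulrBl normrM -[(eps%:C)%C]mulr1 ler_pM ?normr_ge0 ?unitary_entry_le1 //.
Qed.

Lemma unimodular_dist1 z : unimodular z -> `|z - 1| ^+ 2 <= 4.
Proof.
move=> uz; have : `|z - 1| <= 2 by rewrite (le_trans (ler_normB _ _)) // normr1 unimodular_norm.
by move/(lerXn2r 2 (normr_ge0 _) (ler0n _ 2)); rewrite -natrX.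
Qed.

Lemma pow2_precision (eps : R) : 0 < eps ->
  exists m : nat, forall z : C, `|z| ^+ 2 * 2 ^+ m <= 4 -> `|z| <= (eps%:C)%C.
Proof.
move=> eps_gt0; set r := 4 / eps ^+ 2.
have r_ge0 : 0 <= r by rewrite divr_ge0 ?ler0n // exprn_ge0 // ltW.
exists (Num.Def.archi_bound r) => z; set m := Num.Def.archi_bound r.
have le4 : (4 : R) <= eps ^+ 2 * 2 ^+ m.
  have -> : (4 : R) = eps ^+ 2 * r by rewrite mulrCA divff ?mulr1 // expf_neq0 // gt_eqF.
  rewrite ler_wpM2l ?exprn_ge0 ?(ltW eps_gt0) //; apply: le_trans (ltW (archi_boundP r_ge0)) _.
  by rewrite -natrX ler_nat ltnW // ltn_expl.
have le4C : (4 : C) <= (eps%:C)%C ^+ 2 * 2 ^+ m.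
  by move: le4; rewrite -lecR rmorphM !rmorphXn !rmorph_nat.
move=> le_z; have eps_ge0 : 0 <= (eps%:C)%C by rewrite ler0c ltW.
have : `|z| ^+ 2 <= (eps%:C)%C ^+ 2.
  by rewrite -(ler_pM2r (exprn_gt0 m (ltr0n _ 2))) (le_trans le_z le4C).
by rewrite -(ler_sqr (normr_ge0 _)) // qualifE /= eps_ge0.
Qed.

Definition cnu_circuit nc (P : 'M[C]_2) (mu ka : C) (m : nat) : circuit nc.+1 :=
  let ctl := controls nc in
  ugate ord_max P ++ mcw ctl ord_max (sqrtC ka) ++ ugate ord_max (P^t*) ++
  phase_ladder ctl ord_max mu m.

Lemma cnot_count_cnu_circuit nc P mu ka m :
  (cnot_count (cnu_circuit nc P mu ka m) <= 48 * m.+1 * nc.+1)%N.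
Proof.
rewrite !cnot_count_cat !cnot_count_ugate.
have := cnot_count_mcw (controls nc) ord_max (sqrtC ka).
have := cnot_count_phase_ladder ord_max (controls nc) mu m.
by rewrite size_controls; nia.
Qed.

Lemma cnu_circuit_mx nc P mu ka m :
  P \is unitarymx -> unimodular mu -> unimodular ka ->
  exists2 phi, circuit_mx (cnu_circuit nc P mu ka m) = phase_mx phi *m
    ctrl_mx ord_max (fun v => if all_set (controls nc) v
      then P^t* *m diag2 (fun b => if b then ka^* else ka) *m P else 1%:M) &
    forall v, `|phi v - (if all_set (controls nc) v then mu else 1)| ^+ 2 * 2 ^+ m
      <= `|mu - 1| ^+ 2.
Proof.
move=> uP umu uka; set ctl := controls nc; set nu := sqrtC ka.
have uniq_ctl : uniq ctl by case/andP: (uniq_controls nc).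
have [phi phi_mx phi_le] := phase_ladder_mx ord_max m uniq_ctl umu.
have uPt : P^t* \is unitarymx by rewrite trmxC_unitary.
have unu : unimodular nu by apply: unimodular_sqrt.
exists phi => //; rewrite !circuit_mx_cat phi_mx mcw_mx ?uniq_controls //.
rewrite (ugate_mx _ uP) (ugate_mx _ uPt) -!mulmxA !mul_ctrl_mx; congr (_ *m _).
apply: eq_ctrl_mx => v; case: ifP => _; last by rewrite mul1mx (mulmx1C (unitarymxP uP)).
congr (_ *m (_ *m _)).
by apply: eq_diag2 => -[]; rewrite /nu -?rmorphXn /= sqrtCK.
Qed.

Theorem corollary1 (U : 'M[C]_2) (hU : U \is unitarymx) (eps : R) (heps : 0 < eps) :
  exists K : nat, forall nc : nat,
    exists c : circuit nc.+1,
      (cnot_count c <= K * nc.+1)%N /\ approx_CnU U eps (circuit_mx c).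
Proof.
have [P [mu [ka [uP umu uka ->]]]] := unitary2_decomposition hU.
have [m precise_m] := pow2_precision heps.
exists (48 * m.+1)%N => nc; exists (cnu_circuit nc P mu ka m).
split; first exact: cnot_count_cnu_circuit.
have [phi -> phi_le] := cnu_circuit_mx nc m uP umu uka.
apply: approx_CnU_phase_ctrl => [|v].
  have uPt : P^t* \is unitarymx by rewrite trmxC_unitary.
  apply: mul_unitarymx (mul_unitarymx uPt _) uP.
  by apply: diag2_unitary => -[]; [exact: unimodular_conj | exact: uka].
exact/precise_m/(le_trans (phi_le v))/unimodular_dist1.
Qed.
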